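(* Let $k$ be an algebraically closed field of characteristic zero and let $A$ be an integral normal $k$-algebra. Then for every nonzero locally nilpotent $k$-derivation $\partial$ of $A$, the Rees algebra $R(A,\partial)$ is integral and normal.
   Context: For a locally nilpotent $k$-derivation $\partial$ of $A$, the Rees algebra is $R(A,\partial)=\bigoplus_{n\geq0}\ker(\partial^{n+1})\,\upsilon^n\subseteq A[\upsilon]$, graded by $n$, with multiplication induced by $A[\upsilon]$. *)

From HB Require Import structures.
From mathcomp Require Import all_boot all_order all_algebra.
Set Implicit Arguments. Unset Strict Implicit. Unset Printing Implicit Defensive.
Import Order.TTheory GRing.Theory Num.Theory.
Local Open Scope ring_scope.

(* A k-algebra A is given as an integral domain A together with the structure
   morphism iota : k -> A. *)

Definition is_derivation (A : comNzRingType) (d : A -> A) : Prop :=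
  (forall a b, d (a + b) = d a + d b) /\
  (forall a b, d (a * b) = a * d b + d a * b).

Definition k_linear (k : fieldType) (A : comNzRingType) (iota : k -> A)
    (d : A -> A) : Prop :=
  forall (c : k) (a : A), d (iota c * a) = iota c * d a.

Definition locally_nilpotent (A : comNzRingType) (d : A -> A) : Prop :=
  forall a : A, exists n : nat, iter n d a = 0.

(* Membership in the Rees algebra
   R(A,d) = \bigoplus_n ker(d^(n+1)) v^n  inside A[v] = {poly A}. *)
Definition in_rees (A : comNzRingType) (d : A -> A) (p : {poly A}) : Prop :=
  forall n : nat, iter n.+1 d p`_n = 0.

Notation tofrac := (@FracField.tofrac _).
Local Notation "x %:F" := (tofrac x).

Definition subring_of (B : comNzRingType) (S : B -> Prop) : Prop :=
  [/\ S 1, (forall a b, S a -> S b -> S (a - b)) &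
      (forall a b, S a -> S b -> S (a * b))].

Definition integral_subring (B : idomainType) (S : B -> Prop) : Prop :=
  [/\ subring_of S, (1 : B) != 0 &
      (forall a b, S a -> S b -> a * b = 0 -> a = 0 \/ b = 0)].

(* A subring S of an integral domain B is normal: every element of its
   fraction field (realized inside {fraction B} as the quotients p/q with
   p, q in S, q <> 0) that is a root of a monic polynomial with coefficients
   in S already lies in S. *)
Definition normal_subring (B : idomainType) (S : B -> Prop) : Prop :=
  forall x : {fraction B},
    (exists p q : B, [/\ S p, S q, q != 0 & x = p%:F / q%:F]) ->
    (exists P : {poly {fraction B}},
        [/\ P \is monic,
            (forall i, (i < size P)%N -> exists s, S s /\ P`_i = s%:F)
          & root P x]) ->
    exists s, S s /\ x = s%:F.

Definition normal_domain (A : idomainType) : Prop :=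
  normal_subring (fun _ : A => True).

(* Write K for the fraction field of A.  If x in Frac R(A,d) is integral over
   R(A,d), a subring of A[v], then clearing denominators and a gcd argument in
   K[v] show that x is a polynomial H in K[v], root of a monic polynomial C over
   A[v].  Each value H(j), j in N, is a root of the monic C(j) over A, hence lies
   in A since A is normal; as A contains Q, interpolation at the integers puts
   the coefficients of H in A.  Such an f in A[v] lies in R(A,d): otherwise let
   E >= 1 be its exact level (the largest E with d^(n+E) f_n <> 0 for some n) and
   t the last index attaining it.  By Leibniz's rule in characteristic zero, f^m
   has exact level mE, attained at mt, whereas the equation f^m = - sum c_i f^i
   with c_i in R(A,d) puts f^m at level (m-1)E. *)

From mathcomp Require Import all_boot all_order all_algebra.
From mathcomp Require Import zify ring generic_quotient.
Set Implicit Arguments. Unset Strict Implicit. Unset Printing Implicit Defensive.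
Import GRing.Theory.
Local Open Scope ring_scope.

Local Notation "x %:F" := (tofrac x).

Section Derivation.
Variables (A : comNzRingType) (d : A -> A).
Hypothesis derd : is_derivation d.

Lemma derivationD a b : d (a + b) = d a + d b. Proof. exact: derd.1. Qed.
Lemma derivationM a b : d (a * b) = a * d b + d a * b. Proof. exact: derd.2. Qed.

Lemma derivation0 : d 0 = 0.
Proof. by apply: (addrI (d 0)); rewrite -derivationD !addr0. Qed.

Lemma derivation1 : d 1 = 0.
Proof. by apply: (addrI (d 1)); rewrite addr0 -{3}[1]mulr1 derivationM mul1r mulr1. Qed.

Lemma derivationN a : d (- a) = - d a.
Proof. by apply: (addrI (d a)); rewrite -derivationD !subrr derivation0. Qed.

Lemma iter_derivation0 n : iter n d 0 = 0.
Proof. by elim: n => //= n ->; rewrite derivation0. Qed.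

Lemma iter_derivationD n a b : iter n d (a + b) = iter n d a + iter n d b.
Proof. by elim: n => //= n ->; rewrite derivationD. Qed.

Lemma iter_derivationN n a : iter n d (- a) = - iter n d a.
Proof. by elim: n => //= n ->; rewrite derivationN. Qed.

Lemma iter_derivation_sum n (I : Type) (r : seq I) (P : pred I) (F : I -> A) :
  iter n d (\sum_(i <- r | P i) F i) = \sum_(i <- r | P i) iter n d (F i).
Proof. exact: (big_morph _ (iter_derivationD n) (iter_derivation0 n)). Qed.

Lemma iter_derivation_eq0_le m n a :
  (m <= n)%N -> iter m d a = 0 -> iter n d a = 0.
Proof. by move=> /subnK <- da0; rewrite iterD da0 iter_derivation0. Qed.

Lemma iter_derivationM n a b :
  iter n d (a * b) = \sum_(i < n.+1) (iter (n - i) d a * iter i d b) *+ 'C(n, i).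
Proof.
elim: n a b => [|n IHn] a b; first by rewrite big_ord1.
rewrite iterSr derivationM iter_derivationD !IHn addrC.
rewrite [in RHS]big_ord_recl [X in X + _ = _]big_ord_recl -addrA.
congr (_ + _); first by rewrite /= !bin0 subn0 -iterSr.
under [in RHS]eq_bigr => i _ do rewrite lift0 subSS binS mulrnDr.
rewrite big_split /=; congr (_ + _); last first.
  by apply: eq_bigr => i _; rewrite -iterSr.
rewrite [in RHS]big_ord_recr /= bin_small // mulr0n addr0.
by apply: eq_bigr => i _; rewrite -iterSr /bump add1n -subSn ?subSS.
Qed.

Lemma iter_derivationM_eq0 i j n a b : (i + j <= n)%N ->
  iter i d a = 0 -> iter j.+1 d b = 0 -> iter n d (a * b) = 0.
Proof.
move=> le_ijn da0 db0; rewrite iter_derivationM big1 // => k _.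
have [le_kj | lt_jk] := leqP k j; last first.
  by rewrite (@iter_derivation_eq0_le j.+1 k b) // mulr0 mul0rn.
by rewrite (@iter_derivation_eq0_le i (n - k) a) ?mul0r ?mul0rn //; lia.
Qed.

Lemma iter_derivationM_top i j a b :
  iter i.+1 d a = 0 -> iter j.+1 d b = 0 ->
  iter (i + j) d (a * b) = (iter i d a * iter j d b) *+ 'C(i + j, j).
Proof.
move=> da0 db0; have lt_j : (j < (i + j).+1)%N by lia.
rewrite iter_derivationM (bigD1 (Ordinal lt_j)) //= addnK big1 ?addr0 // => k.
rewrite -val_eqE /= => ne_kj; have [lt_kj | lt_jk] := ltnP k j.
  by rewrite (@iter_derivation_eq0_le i.+1 _ a) ?mul0r ?mul0rn //; lia.
by rewrite (@iter_derivation_eq0_le j.+1 k b) ?mulr0 ?mul0rn //; lia.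
Qed.

Lemma locally_nilpotent_uniform (F : nat -> A) s : locally_nilpotent d ->
  exists N, forall i, (i < s)%N -> iter N d (F i) = 0.
Proof.
move=> nil_d; elim: s => [|s [N FN]]; first by exists 0%N.
have [M FM] := nil_d (F s); exists (maxn N M) => i; rewrite ltnS leq_eqVlt.
case/predU1P => [-> | /FN]; first exact: iter_derivation_eq0_le (leq_maxr N M) FM.
exact: iter_derivation_eq0_le (leq_maxl N M).
Qed.

(* [rees_level E g] says that [v^E g] lies in R(A,d); level 0 is R(A,d) itself. *)
Definition rees_level (E : nat) (g : {poly A}) : Prop :=
  forall n, iter (E + n).+1 d g`_n = 0.

Lemma in_rees_level0 g : in_rees d g = rees_level 0 g. Proof. by []. Qed.

Lemma rees_levelP E g :
  reflect (rees_level E g) [forall i : 'I_(size g), iter (E + i).+1 d g`_i == 0].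
Proof.
apply: (iffP forallP) => [g0 n | g0 i]; last exact/eqP.
have [lt_ng | le_gn] := ltnP n (size g); first exact/eqP/(g0 (Ordinal lt_ng)).
by rewrite nth_default // iter_derivation0.
Qed.

Lemma rees_level_le E E' g : (E <= E')%N -> rees_level E g -> rees_level E' g.
Proof. by move=> le_EE' gE n; apply: (iter_derivation_eq0_le _ (gE n)); lia. Qed.

Lemma rees_level0 E : rees_level E 0.
Proof. by move=> n; rewrite coef0 iter_derivation0. Qed.

Lemma rees_level1 E : rees_level E 1.
Proof.
move=> n; rewrite coef1; case: eqP => _; last exact: iter_derivation0.
by rewrite iterSr derivation1 // iter_derivation0.
Qed.

Lemma rees_levelD E g h : rees_level E g -> rees_level E h -> rees_level E (g + h).
Proof. by move=> gE hE n; rewrite coefD iter_derivationD // gE hE addr0. Qed.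

Lemma rees_levelN E g : rees_level E g -> rees_level E (- g).
Proof. by move=> gE n; rewrite coefN iter_derivationN // gE oppr0. Qed.

Lemma rees_levelM E E' g h :
  rees_level E g -> rees_level E' h -> rees_level (E + E') (g * h).
Proof.
move=> gE hE' n; rewrite coefM iter_derivation_sum //; apply: big1 => i _.
apply: (iter_derivationM_eq0 (i := (E + i).+1) (j := (E' + (n - i))%N)) => //.
by have := ltn_ord i; lia.
Qed.

Lemma rees_level_sum E (I : Type) (r : seq I) (P : pred I) (F : I -> {poly A}) :
  (forall i, P i -> rees_level E (F i)) -> rees_level E (\sum_(i <- r | P i) F i).
Proof.
by move=> FE; apply: big_ind => //; [exact: rees_level0 | exact: rees_levelD].
Qed.

End Derivation.

(* [q ^+ deg C * C.[p / q]], i.e. the value of [C] at [p / q] with denominators cleared. *)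
Definition homog_eval (R : nzSemiRingType) (C : {poly R}) (p q : R) : R :=
  \sum_(i < size C) C`_i * p ^+ i * q ^+ ((size C).-1 - i).

Lemma homog_evalM (R : comNzRingType) (C : {poly R}) (u v y : R) :
  homog_eval C (u * y) (v * y) = y ^+ (size C).-1 * homog_eval C u v.
Proof.
rewrite mulr_sumr; apply: eq_bigr => i _.
have le_iC : (i <= (size C).-1)%N by have := ltn_ord i; lia.
have -> : y ^+ (size C).-1 = y ^+ i * y ^+ ((size C).-1 - i) by rewrite -exprD subnKC.
by rewrite !exprMn; ring.
Qed.

Lemma homog_eval1 (R : nzSemiRingType) (C : {poly R}) (u : R) :
  homog_eval C u 1 = C.[u].
Proof. by rewrite horner_coef; apply: eq_bigr => i _; rewrite expr1n mulr1. Qed.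

Lemma homog_eval_mulr (R : comNzRingType) (C : {poly R}) (u q : R) :
  homog_eval C (u * q) q = q ^+ (size C).-1 * C.[u].
Proof. by rewrite -{2}[q]mul1r homog_evalM homog_eval1. Qed.

Lemma homog_eval_monic (R : nzSemiRingType) (C : {poly R}) (p q : R) :
  C \is monic -> homog_eval C p q =
    p ^+ (size C).-1 + \sum_(i < (size C).-1) C`_i * p ^+ i * q ^+ ((size C).-1 - i).
Proof.
move=> monC; rewrite /homog_eval; have := monicP monC; rewrite lead_coefE.
have : (0 < size C)%N by rewrite size_poly_gt0 monic_neq0.
case: (size C) => // m _ /= Cm.
by rewrite big_ord_recr /= Cm subnn expr0 mulr1 mul1r addrC.
Qed.

Lemma root_homog_eval (F : fieldType) (C : {poly F}) (p q : F) :
  q != 0 -> root C (p / q) = (homog_eval C p q == 0).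
Proof.
move=> q0; rewrite -{2}(divfK q0 p) homog_eval_mulr mulf_eq0 expf_eq0.
by rewrite (negPf q0) andbF.
Qed.

Lemma rmorph_homog_eval (R S : comNzRingType) (f : {rmorphism R -> S})
    (C : {poly R}) (p q : R) : C \is monic ->
  f (homog_eval C p q) = homog_eval (map_poly f C) (f p) (f q).
Proof.
move=> monC; rewrite /homog_eval size_map_poly_id0; last first.
  by rewrite (monicP monC) rmorph1 oner_neq0.
rewrite rmorph_sum; apply: eq_bigr => i _.
by rewrite coef_map !rmorphM !rmorphXn.
Qed.

Lemma homog_eval_eq0_dvdp (K : fieldType) (C : {poly {poly K}}) (P Q : {poly K}) :
  C \is monic -> Q != 0 -> homog_eval C P Q = 0 -> Q %| P.
Proof.
move=> monC Q0 CPQ.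
have g0 : gcdp P Q != 0 by rewrite gcdp_eq0 negb_and Q0 orbT.
have [P1 [Q1 [eP eQ copPQ]]] : exists P1 Q1,
    [/\ P = P1 * gcdp P Q, Q = Q1 * gcdp P Q & coprimep P1 Q1].
  exists (P %/ gcdp P Q), (Q %/ gcdp P Q).
  by rewrite !divpK ?dvdp_gcdl ?dvdp_gcdr ?coprimep_div_gcd ?Q0 ?orbT.
move: (gcdp P Q) g0 eP eQ CPQ => g g0 -> ->.
rewrite homog_evalM dvdp_mul2r // => /eqP; rewrite mulf_eq0 expf_eq0 (negPf g0) andbF.
rewrite homog_eval_monic // => /eqP P1m.
have Q1_P1m : Q1 %| P1 ^+ (size C).-1.
  have := dvdp0 Q1; rewrite -P1m dvdp_addl //.
  apply: (big_ind (fun x => Q1 %| x)) => [|x y|i _].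
  - exact: dvdp0.
  - exact: dvdp_add.
  - by apply/dvdp_mull/dvdp_exp/dvdpp; rewrite subn_gt0.
have Q1_1 : Q1 %| 1.
  have copQP1m : coprimep Q1 (P1 ^+ (size C).-1).
    by apply: coprimep_expr; rewrite coprimep_sym.
  by rewrite -(Gauss_dvdpl 1 copQP1m) mul1r.
exact: dvdp_trans Q1_1 (dvd1p P1).
Qed.

Section ReesTop.
Variables (A : idomainType) (d : A -> A).
Hypotheses (derd : is_derivation d) (pchar0 : [pchar A] =i pred0).

(* [E] is the exact level of [g] and [t] the last index attaining it. *)
Definition rees_top (E t : nat) (g : {poly A}) : Prop :=
  [/\ rees_level d E g, iter (E + t) d g`_t != 0 &
      forall n, (t < n)%N -> iter (E + n) d g`_n = 0].

Lemma rees_top1 : rees_top 0 0 1.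
Proof.
split; [exact: rees_level1 | by rewrite coef1 oner_neq0 |].
by move=> [|n] // _; rewrite coef1 iter_derivation0.
Qed.

Lemma rees_topM E E' t t' g h : rees_top E t g -> rees_top E' t' h ->
  rees_top (E + E') (t + t') (g * h).
Proof.
move=> [gE gt g_t] [hE' ht' h_t'].
have coef_eq0 n (i : 'I_n.+1) : (t < i)%N || (t' < n - i)%N ->
    iter (E + E' + n) d (g`_i * h`_(n - i)) = 0.
  have := ltn_ord i; rewrite ltnS => le_in /orP[lt_ti | lt_t'i].
    by apply: (iter_derivationM_eq0 derd _ (g_t _ lt_ti) (hE' _)); lia.
  rewrite mulrC; apply: (iter_derivationM_eq0 derd _ (h_t' _ lt_t'i) (gE _)).
  lia.
split; first exact: rees_levelM.
- have lt_t : (t < (t + t').+1)%N by lia.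
  rewrite coefM iter_derivation_sum // (bigD1 (Ordinal lt_t)) //= big1 ?addr0.
    rewrite addKn -addnA (addnCA E') addnA.
    rewrite (iter_derivationM_top derd (gE t) (hE' t')) -mulr_natr.
    by rewrite !mulf_neq0 // (pcharf0P _).1 // -lt0n bin_gt0 leq_addl.
  move=> i; rewrite -val_eqE /= => ne_it; apply: coef_eq0.
  by have := ltn_ord i; lia.
- move=> n lt_n; rewrite coefM iter_derivation_sum //.
  by apply: big1 => i _; apply: coef_eq0; have := ltn_ord i; lia.
Qed.

Lemma rees_topX E t g m : rees_top E t g -> rees_top (m * E) (m * t) (g ^+ m).
Proof.
move=> gEt; elim: m => [|m IHm]; first exact: rees_top1.
by rewrite exprS !mulSn; apply: rees_topM.
Qed.

Lemma rees_top_exists g : locally_nilpotent d -> ~ rees_level d 0 g ->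
  exists E t, (0 < E)%N /\ rees_top E t g.
Proof.
move=> nil_d /(rees_levelP derd)/forallPn[i0 gi0].
pose nz_shift E := [exists i : 'I_(size g), iter (E + i) d g`_i != 0].
have [N gN] := locally_nilpotent_uniform derd (fun i => g`_i) (size g) nil_d.
have nz_shift_le_N E : nz_shift E -> (E <= N)%N.
  case/existsP => i /eqP gi; rewrite leqNgt; apply/negP => lt_NE; apply: gi.
  by apply: (iter_derivation_eq0_le derd _ (gN i (ltn_ord i))); lia.
have [|E nz_shiftE E_max] := ex_maxnP _ nz_shift_le_N; first by exists 1%N; apply/existsP; exists i0.
have [i gi] := existsP nz_shiftE.
pose top_at t := (t < size g)%N && (iter (E + t) d g`_t != 0).
have top_at_le t : top_at t -> (t <= size g)%N by case/andP => /ltnW.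
have [|t /andP[_ gt] t_max] := ex_maxnP _ top_at_le; first by exists i; rewrite /top_at ltn_ord.
exists E, t; split; first by apply: E_max; apply/existsP; exists i0.
split=> //.
- apply/(rees_levelP derd)/forallP => j; apply: contraT => gj.
  have /E_max : nz_shift E.+1 by apply/existsP; exists j.
  by rewrite ltnn.
- move=> n lt_tn; have [lt_ng | le_gn] := ltnP n (size g); last first.
    by rewrite nth_default // iter_derivation0.
  by apply/eqP; apply: contraTT lt_tn => gn; rewrite -leqNgt t_max // /top_at lt_ng.
Qed.

Lemma rees_integral_closed (C : {poly {poly A}}) f : locally_nilpotent d ->
  C \is monic -> (forall i, in_rees d C`_i) -> root C f -> in_rees d f.
Proof.
move=> nil_d monC CR rootCf; rewrite in_rees_level0.
apply/(rees_levelP derd); apply: contraT => /(rees_levelP derd) fR.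
have [E [t [E_gt0 fEt]]] := rees_top_exists nil_d fR.
move: rootCf; rewrite /root -homog_eval1 homog_eval_monic // addr_eq0 => /eqP.
case: (size C).-1 => [|m] fm.
  by move: fm; rewrite big_ord0 oppr0 expr0 => /eqP; rewrite oner_eq0.
have fm_level : rees_level d (m.+1 * E).-1 (f ^+ m.+1).
  rewrite fm; apply/(rees_levelN derd)/(rees_level_sum derd) => i _.
  rewrite expr1n mulr1; apply: (rees_level_le derd (E := 0 + i * E)).
    by have := ltn_ord i; nia.
  by apply: (rees_levelM derd); [exact: CR | case: (rees_topX i fEt)].
have [_ + _] := rees_topX m.+1 fEt.
by rewrite -(prednK (_ : 0 < m.+1 * E)%N) ?muln_gt0 // addSn fm_level eqxx.
Qed.

End ReesTop.

Lemma tofrac_inj (B : idomainType) : injective (tofrac : B -> {fraction B}).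
Proof. by move=> a b /eqP; rewrite tofrac_eq => /eqP. Qed.

Lemma frac_repr (B : idomainType) (x : {fraction B}) :
  exists p q : B, q != 0 /\ x = p%:F / q%:F.
Proof.
elim/quotW: x => r; exists (\n_r), (\d_r); split; first exact: denom_ratioP.
have d0 : (\d_r)%:F != 0 by rewrite tofrac_eq0 denom_ratioP.
apply: (mulIf d0); rewrite divfK //; unlock tofrac.
rewrite -[_ * _]FracField.pi_mul; apply/eqmodP => /=.
rewrite FracField.equivfE /FracField.mulf /=.
by rewrite !numden_Ratio ?mulr1 ?oner_neq0 ?denom_ratioP // mulrC.
Qed.

Lemma normal_domain_root (A : idomainType) (Q : {poly A}) (y : {fraction A}) :
  normal_domain A -> Q \is monic -> root (map_poly tofrac Q) y -> exists b, y = b%:F.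
Proof.
move=> normA monQ Qy; suff [b [_ ->]] : exists b, True /\ y = b%:F by exists b.
have [p [q [q0 ypq]]] := frac_repr y; apply: normA; first by exists p, q.
exists (map_poly tofrac Q); split; [exact: monic_map | | exact: Qy].
by move=> i _; exists Q`_i; rewrite coef_map.
Qed.

Section RationalAlgebra.
Variable A : idomainType.
Hypothesis natr_unit : forall n, (0 < n)%N -> (n%:R : A) \is a GRing.unit.

Lemma map_tofrac_of_values (H : {poly {fraction A}}) b :
  (forall j, (b <= j)%N -> exists e, H.[j%:R] = e%:F) ->
  exists f, H = map_poly tofrac f.
Proof.
elim: (size H) {-2}H (leqnn (size H)) b => [|n IHn] {}H sizeH b Hval.
  by exists 0; move: sizeH; rewrite size_poly_leq0 => /eqP ->; rewrite rmorph0.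
have [e He] := Hval b (leqnn b).
have [H1 eH1] : exists H1 : {poly {fraction A}}, H - e%:F%:P = H1 * ('X - b%:R%:P).
  by apply/factor_theorem; rewrite /root hornerD hornerN hornerC He subrr.
have XsubC0 : 'X - (b%:R)%:P != 0 :> {poly {fraction A}} by rewrite polyXsubC_eq0.
have sizeH1 : (size H1 <= n)%N.
  have sizeHe : (size (H - e%:F%:P)%R <= n.+1)%N.
    apply: leq_trans (size_polyD _ _) _; rewrite geq_max sizeH size_polyN.
    exact: leq_trans (size_polyC_leq1 _) _.
  have -> : H1 = (H - e%:F%:P) %/ ('X - b%:R%:P) by rewrite eH1 (mulpK _ XsubC0).
  have sizeX : size ('X - (b%:R)%:P : {poly {fraction A}}) = 2 := size_XsubC _.
  by rewrite (size_divp _ XsubC0) [in X in (_ - X)%N]sizeX leq_subLR add1n.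
have [f1 H1E] : exists f1, H1 = map_poly tofrac f1.
  apply: (IHn H1 sizeH1 b.+1) => j lt_bj; have [ej Hej] := Hval j (ltnW lt_bj).
  have jb_unit : ((j - b)%N%:R : A) \is a GRing.unit by apply: natr_unit; rewrite subn_gt0.
  have jb0 : ((j - b)%N%:R : A)%:F != 0.
    by rewrite tofrac_eq0; apply: contraTneq jb_unit => ->; rewrite unitr0.
  have H1j : H1.[j%:R] * ((j - b)%N%:R : A)%:F = (ej - e)%:F.
    rewrite rmorph_nat natrB ?(ltnW lt_bj) // -hornerXsubC -hornerM -eH1.
    by rewrite hornerD hornerN hornerC Hej rmorphB.
  exists ((ej - e) * ((j - b)%N%:R)^-1).
  by rewrite rmorphM (rmorphV _ jb_unit) /= -H1j (mulfK jb0).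
exists (f1 * ('X - b%:R%:P) + e%:P).
rewrite rmorphD rmorphM /= rmorphB /= map_polyX map_polyC /= rmorph_nat.
by rewrite -H1E -eH1 map_polyC subrK.
Qed.

Lemma normal_poly_root (C : {poly {poly A}}) (H : {poly {fraction A}}) :
  normal_domain A -> C \is monic -> root (map_poly (map_poly tofrac) C) H ->
  exists f, H = map_poly tofrac f.
Proof.
move=> normA monC CH; apply: (@map_tofrac_of_values _ 0) => j _.
pose Cj := map_poly (horner_eval (j%:R : A)) C.
apply: (normal_domain_root normA (monic_map _ monC : Cj \is monic)).
suff -> : map_poly tofrac Cj =
    map_poly (horner_eval j%:R) (map_poly (map_poly tofrac) C).
  exact: (rmorph_root (horner_eval j%:R) CH).
rewrite -!map_poly_comp; apply: eq_map_poly => c /=.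
by rewrite !horner_evalE -(rmorph_nat tofrac) horner_map.
Qed.

Local Notation phi := (map_poly (tofrac : A -> {fraction A})).

Lemma poly_integrally_closed (C : {poly {poly A}}) (x : {fraction {poly A}}) :
  normal_domain A -> C \is monic -> root (map_poly tofrac C) x -> exists f, x = f%:F.
Proof.
move=> normA monC; have [p [q [q0 ->]]] := frac_repr x.
rewrite root_homog_eval ?tofrac_eq0 // -rmorph_homog_eval // tofrac_eq0 => /eqP Cpq.
have phi_inj : injective phi := map_inj_poly (@tofrac_inj A) (rmorph0 _).
have phiq0 : phi q != 0 by rewrite -(rmorph0 phi) (inj_eq phi_inj).
have : homog_eval (map_poly phi C) (phi p) (phi q) = 0.
  by rewrite -rmorph_homog_eval // Cpq rmorph0.
move=> /[dup] Chom /(homog_eval_eq0_dvdp (monic_map _ monC) phiq0) /divpK pE.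
have CH : root (map_poly phi C) (phi p %/ phi q).
  move: Chom; rewrite -{1}pE homog_eval_mulr => /eqP.
  by rewrite mulf_eq0 expf_eq0 (negPf phiq0) andbF.
have [f fE] := normal_poly_root normA monC CH.
have pE' : p = f * q by apply: phi_inj; rewrite rmorphM /= -fE pE.
by exists f; rewrite pE' rmorphM mulfK // tofrac_eq0.
Qed.

End RationalAlgebra.

Lemma lift_map_tofrac (B : idomainType) (S : B -> Prop) (P : {poly {fraction B}}) :
  S 0 -> (forall i, (i < size P)%N -> exists s, S s /\ P`_i = s%:F) ->
  exists C : {poly B}, map_poly tofrac C = P /\ forall i, S C`_i.
Proof.
move=> S0 PS; have Pi i : exists s, P`_i == s%:F.
  have [lt_iP | le_Pi] := ltnP i (size P).
    by have [s [_ ->]] := PS i lt_iP; exists s.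
  by exists 0; rewrite nth_default.
exists (\poly_(i < size P) xchoose (Pi i)); split.
  apply/polyP => i; rewrite coef_map coef_poly; case: ltnP => [_ | le_Pi].
    exact/esym/eqP/(xchooseP (Pi i)).
  by rewrite nth_default.
move=> i; rewrite coef_poly; case: ltnP => // lt_iP.
have [s [Ss Pis]] := PS i lt_iP.
suff -> : xchoose (Pi i) = s by [].
by apply: tofrac_inj; rewrite -Pis; apply/esym/eqP/(xchooseP (Pi i)).
Qed.

Lemma map_tofrac_monic (B : idomainType) (C : {poly B}) :
  (map_poly tofrac C \is monic) = (C \is monic).
Proof.
rewrite !monicE (lead_coef_map_inj (@tofrac_inj B) (rmorph0 _)).
by rewrite -(inj_eq (@tofrac_inj B)) rmorph1.
Qed.

Lemma rees_subring (A : comNzRingType) (d : A -> A) :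
  is_derivation d -> subring_of (in_rees d).
Proof.
move=> derd; split; first exact: (rees_level1 derd 0).
- move=> a b; rewrite !in_rees_level0 => aR bR.
  exact: (rees_levelD derd aR (rees_levelN derd bR)).
- move=> a b; rewrite !in_rees_level0 => aR bR.
  exact: (rees_levelM derd aR bR).
Qed.

Lemma rees_integral_subring (A : idomainType) (d : A -> A) :
  is_derivation d -> integral_subring (in_rees d).
Proof.
move=> derd; split; [exact: rees_subring | exact: oner_neq0 |].
by move=> a b _ _ /eqP; rewrite mulf_eq0 => /orP[] /eqP ->; [left | right].
Qed.

Theorem corollary2p5 (k : closedFieldType) (A : idomainType)
    (iota : {rmorphism k -> A}) :
  [pchar k] =i pred0 ->
  normal_domain A ->
  forall d : A -> A,
    is_derivation d -> k_linear iota d -> locally_nilpotent d ->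
    (exists a : A, d a != 0) ->
    integral_subring (in_rees d) /\ normal_subring (in_rees d).
Proof.
move=> pchar0k normA d derd _ nil_d _.
have pchar0 : [pchar A] =i pred0 by move=> p; rewrite (fmorph_pchar iota) pchar0k.
have natr_unit n : (0 < n)%N -> (n%:R : A) \is a GRing.unit.
  by move=> n_gt0; rewrite -(rmorph_nat iota) rmorph_unit // unitfE (pcharf0P _).1 -?lt0n.
split; first exact: rees_integral_subring.
move=> x _ [P [monP PR Px]].
have [C [CP CR]] := lift_map_tofrac (rees_level0 derd 0) PR.
have monC : C \is monic by rewrite -map_tofrac_monic CP; exact: monP.
rewrite -CP in Px; have [f xf] := poly_integrally_closed natr_unit normA monC Px.
exists f; split; last exact: xf.
apply: (rees_integral_closed derd pchar0 nil_d monC CR).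
by move: Px; rewrite xf /root horner_map tofrac_eq0.
Qed.
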